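(* Let $M$ be a finite abelian group of odd order and exponent greater than $2$. Then $(K,1)=\{(A,1):A\in K\}$ is the only subloop of $L_M$ of order $4$.
   Context: Let $K=\{1,a,b,c\}$ be the Klein four-group. Set $L_M=K\times M$ with the operation $(A,x)*(B,y)=(AB,xy)$ if $B=1$, and $(A,x)*(B,y)=(AB,x^{-1}y)$ if $B\neq 1$. *)

From mathcomp Require Import all_boot all_fingroup all_solvable.
Set Implicit Arguments. Unset Strict Implicit. Unset Printing Implicit Defensive.
Local Open Scope group_scope.

(* The Klein four-group K, modelled as bool * bool with componentwise xor;
   identity 1 = (false, false). *)
Definition K := (bool * bool)%type.
Definition K1 : K := (false, false).
Definition Kmul (A B : K) : K := (A.1 (+) B.1, A.2 (+) B.2).

(* The loop L_M = K x M with
   (A,x)*(B,y) = (AB, xy) if B = 1, and (AB, x^-1 y) if B <> 1.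
   M is represented by the carrier of the finite group gT. *)
Definition Lmul (gT : finGroupType) (u v : K * gT) : K * gT :=
  if v.1 == K1 then (Kmul u.1 v.1, u.2 * v.2)
  else (Kmul u.1 v.1, u.2^-1 * v.2).

Definition Lone (gT : finGroupType) : K * gT := (K1, 1).

(* A subloop: a subset containing the identity, closed under the product
   and under left and right division (solutions of a*x = b and y*a = b). *)
Definition subloop (gT : finGroupType) (S : {set K * gT}) : Prop :=
  [/\ Lone gT \in S,
      (forall a b, a \in S -> b \in S -> Lmul a b \in S),
      (forall a b x, a \in S -> b \in S -> Lmul a x = b -> x \in S) &
      (forall a b y, a \in S -> b \in S -> Lmul y a = b -> y \in S)].

From mathcomp Require Import all_boot all_fingroup all_solvable.

(* In a subloop S the pairs (1, y) form a subgroup N of M, and every nonempty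
   fibre {x | (A, x) \in S} is a left coset of N; so |N| divides both |S| = 4
   and the odd |M|, whence N = 1 and S is the graph of a map from K to M.
   For A, B <> 1 the products (A, x)(B, y) = (AB, x^-1 y) and
   (B, y)(A, x) = (AB, y^-1 x) then coincide, so (x^-1 y)^2 = 1 and x = y.
   Applying this to (A, x), (B, x) and their product (AB, 1) gives x = 1. *)
Set Implicit Arguments.
Unset Strict Implicit.
Unset Printing Implicit Defensive.
Local Open Scope group_scope.

Lemma odd_order_expg2_eq1 (gT : finGroupType) (x : gT) :
  odd #[x] -> (x ^+ 2 == 1) = (x == 1).
Proof.
move=> odd_x; apply/idP/idP=> [|/eqP->]; last by rewrite expg1n.
rewrite -order_dvdn -order_eq1.
by move: odd_x; case: #[x] => [|[|[|n]]].
Qed.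

Lemma card_fibres (T1 T2 : finType) (S : {set T1 * T2}) :
  #|S| = \sum_(a : T1) #|[set b | (a, b) \in S]|.
Proof.
rewrite -sum1_card (eq_bigr (fun a => \sum_(b | (a, b) \in S) 1)%N); last first.
  by move=> a _; rewrite -sum1_card; apply: eq_bigl => b; rewrite inE.
by rewrite pair_big_dep; apply: eq_bigl => -[a b].
Qed.

Lemma KmulC A B : Kmul A B = Kmul B A.
Proof. by rewrite /Kmul addbC [B.2 (+) _]addbC. Qed.

Lemma Kmul_eq1 A B : (Kmul A B == K1) = (A == B).
Proof. by case: A B => [[] []] [[] []]. Qed.

Lemma K_third A : exists2 B, B != K1 & B != A.
Proof.
by case: A => [[] []];
  [exists (false, true) | exists (false, true) | exists (true, false) ..].
Qed.

Section LoopProduct.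
Variable gT : finGroupType.
Implicit Types (A B : K) (x y : gT).

Lemma Lmul_K1 A x y : Lmul (A, x) (K1, y) = (A, x * y).
Proof. by case: A => [[] []]. Qed.

Lemma Lmul_neqK1 A B x y : B != K1 -> Lmul (A, x) (B, y) = (Kmul A B, x^-1 * y).
Proof. by rewrite /Lmul /= => /negbTE->. Qed.

End LoopProduct.

Section Subloop.
Variables (gT : finGroupType) (S : {set K * gT}).
Hypothesis subS : subloop S.
Implicit Types (A B : K) (x y : gT).

Definition subloop_fibre A := [set x | (A, x) \in S].
Definition subloop_ker := subloop_fibre K1.

Lemma subloop_ker_group : group_set subloop_ker.
Proof.
case: subS => S1 mulS _ _; apply/group_setP; split=> [|x y]; first by rewrite inE.
by rewrite !inE => Sx Sy; rewrite -Lmul_K1 mulS.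
Qed.
Canonical subloop_ker_group_of := Group subloop_ker_group.

Lemma subloop_fibre_lcoset A x :
  (A, x) \in S -> subloop_fibre A = x *: subloop_ker.
Proof.
case: subS => _ mulS divlS _ Sx; apply/setP=> y; rewrite mem_lcoset !inE.
apply/idP/idP=> [Sy | /(mulS _ _ Sx)]; last by rewrite Lmul_K1 mulKVg.
by apply: divlS Sx Sy _; rewrite Lmul_K1 mulKVg.
Qed.

Lemma dvdn_ker_fibre A : (#|subloop_ker| %| #|subloop_fibre A|)%N.
Proof.
have [-> | [x]] := set_0Vmem (subloop_fibre A); first by rewrite cards0 dvdn0.
by rewrite inE => /subloop_fibre_lcoset->; rewrite card_lcoset.
Qed.

Lemma dvdn_ker_subloop : (#|subloop_ker| %| #|S|)%N.
Proof. by rewrite card_fibres; apply: dvdn_sum => A _; apply: dvdn_ker_fibre. Qed.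

Lemma subloop_ker_trivial : coprime #|S| #|gT| -> subloop_ker = 1.
Proof.
move=> coSM; apply: card_le1_trivg.
have dvdM : (#|subloop_ker| %| #|gT|)%N by rewrite -cardsT cardSg ?subsetT.
have : (#|subloop_ker| %| gcdn #|S| #|gT|)%N by rewrite dvdn_gcd dvdn_ker_subloop.
by rewrite (eqP coSM) dvdn1 => /eqP->.
Qed.

Hypothesis ker1 : subloop_ker = 1.

Lemma subloop_fibre_uniq A x y : (A, x) \in S -> (A, y) \in S -> x = y.
Proof.
move=> Sx Sy; have : y \in subloop_fibre A by rewrite inE.
by rewrite (subloop_fibre_lcoset Sx) ker1 mem_lcoset inE -eq_mulVg1 => /eqP.
Qed.

Lemma subloop_fst_onto A : #|S| = 4 -> exists x, (A, x) \in S.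
Proof.
move=> cardS; have injS : {in S &, injective fst}.
  move=> [B x] [C y] Sx Sy /= eBC; rewrite -eBC in Sy.
  by rewrite (subloop_fibre_uniq Sx Sy) eBC.
have : fst @: S = setT.
  by apply/eqP; rewrite eqEcard subsetT cardsT card_in_imset // cardS card_prod card_bool.
by move/setP/(_ A); rewrite inE => /imsetP[[B x] Sx /= ->]; exists x.
Qed.

Hypothesis oddM : odd #|gT|.

Lemma subloop_snd_eq A B x y :
  A != K1 -> B != K1 -> (A, x) \in S -> (B, y) \in S -> x = y.
Proof.
case: subS => _ mulS _ _ nA nB Sx Sy.
have := mulS _ _ Sx Sy; have := mulS _ _ Sy Sx.
rewrite !Lmul_neqK1 // KmulC => S_yx S_xy.
have sym := subloop_fibre_uniq S_xy S_yx.
have odd_xy : odd #[x^-1 * y].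
  by apply: dvdn_odd oddM; rewrite -cardsT order_dvdG ?inE.
apply/eqP; rewrite eq_mulVg1 -(odd_order_expg2_eq1 odd_xy) expgS expg1 {2}sym.
by rewrite mulgA mulgK mulVg.
Qed.

Lemma subloop_snd_eq1 A x : #|S| = 4 -> (A, x) \in S -> x = 1.
Proof.
move=> cardS; have [-> Sx | nA Sx] := eqVneq A K1.
  have : x \in subloop_ker by rewrite inE.
  by rewrite ker1 inE => /eqP.
have [B nB nBA] := K_third A.
have [y Sy] := subloop_fst_onto B cardS.
have exy := subloop_snd_eq nA nB Sx Sy; rewrite -exy in Sy.
case: subS => _ mulS _ _; have := mulS _ _ Sx Sy.
rewrite Lmul_neqK1 // mulVg => S_AB.
by apply: subloop_snd_eq nA _ Sx S_AB; rewrite Kmul_eq1 eq_sym.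
Qed.

End Subloop.

Theorem corollary4p5 (gT : finGroupType) :
  abelian [set: gT] -> odd #|[set: gT]| -> (2 < exponent [set: gT])%N ->
  forall S : {set K * gT}, subloop S -> #|S| = 4 ->
    S = [set (A, 1) | A : K].
Proof.
move=> _ oddM _ S subS cardS; rewrite cardsT in oddM.
have ker1 : subloop_ker S = 1.
  apply: subloop_ker_trivial => //.
  by rewrite cardS -[4%N]/(2 ^ 2)%N coprime_pexpl // coprime2n.
apply/eqP; rewrite eqEcard cardS card_imset => [|A B [] //].
rewrite card_prod card_bool leqnn andbT; apply/subsetP=> -[A x] Sx.
by rewrite (subloop_snd_eq1 subS ker1 oddM cardS Sx) imset_f.
Qed.
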